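(* Let $G$ be an undirected, weighted, connected graph on vertices $1,\dots,n$, and let $H$ be either its adjacency matrix or its Laplacian matrix, with eigenvalues $\lambda_1\le\cdots\le\lambda_n$. For real $t$ let $p(t)=|\langle s|e^{itH}|r\rangle|^2$ be the fidelity of state transfer from a sender vertex $s$ to a receiver vertex $r$, and suppose $p(t_0)=1$. Let $h\in\mathbb{R}$ satisfy $|h|<\frac{\pi}{\lambda_n-\lambda_1}$. Then \[ p(t_0+h)\ \ge\ 1-h^2\left(\langle s|H^2|s\rangle-\left(\langle s|H|s\rangle\right)^2\right). \]
   Context: For a weighted graph with edge weights $w(j,k)$, the adjacency matrix $A=[a_{jk}]$ has $a_{jk}=w(j,k)$ if $j,k$ are adjacent and $a_{jk}=0$ otherwise; the Laplacian is $L=R-A$ where $R$ is the diagonal matrix of row sums of $A$. $\{|1\rangle,\dots,|n\rangle\}$ is the standard basis of $\mathbb{C}^n$, so $\langle j|M|k\rangle$ is the $(j,k)$ entry of a matrix $M$. *)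

From HB Require Import structures.
From mathcomp Require Import all_boot all_order all_algebra.
From mathcomp Require Import all_classical all_reals all_analysis.
Set Implicit Arguments. Unset Strict Implicit. Unset Printing Implicit Defensive.
Import Order.TTheory GRing.Theory Num.Theory.
Local Open Scope ring_scope.

Section Defs.
Variables (R : realType) (n : nat).

Definition adjacency (e : rel 'I_n) (w : 'I_n -> 'I_n -> R) : 'M[R]_n :=
  \matrix_(j, k) (if e j k then w j k else 0).

Definition laplacian (e : rel 'I_n) (w : 'I_n -> 'I_n -> R) : 'M[R]_n :=
  diag_mx (\row_j (\sum_k adjacency e w j k)) - adjacency e w.

(* <s| e^{itH} |r> = <s|cos(tH)|r> + i <s|sin(tH)|r>, with the exponential
   defined by its power series  e^{itH} = \sum_m (itH)^m / m!,
   split into its real (even m) and imaginary (odd m) parts. *)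
Definition expiH_re (H : 'M[R]_n) (t : R) (s r : 'I_n) : R :=
  limn (fun N => \sum_(k < N)
          ((-1) ^+ k * t ^+ (2 * k) / ((2 * k)`!)%:R * (H ^+ (2 * k)) s r)).

Definition expiH_im (H : 'M[R]_n) (t : R) (s r : 'I_n) : R :=
  limn (fun N => \sum_(k < N)
          ((-1) ^+ k * t ^+ (2 * k).+1 / ((2 * k).+1`!)%:R
             * (H ^+ (2 * k).+1) s r)).

Definition fidelity (H : 'M[R]_n) (s r : 'I_n) (t : R) : R :=
  expiH_re H t s r ^+ 2 + expiH_im H t s r ^+ 2.

End Defs.

From HB Require Import structures.
From mathcomp Require Import all_boot all_order all_algebra.
From mathcomp Require Import all_classical all_reals all_analysis.
From mathcomp Require Import complex ring lra.
Set Implicit Arguments. Unset Strict Implicit. Unset Printing Implicit Defensive.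
Import Order.TTheory GRing.Theory Num.Theory.
Import numFieldNormedType.Exports.
Local Open Scope classical_set_scope.
Local Open Scope sesquilinear_scope.
Local Open Scope complex_scope.
Local Open Scope ring_scope.

(* Diagonalise H = \sum_j l_j v_j v_j^*. Then <s|e^{itH}|r> is the phase sum
   \sum_j conj(v_j s) v_j r e^{i t l_j}, and p(t0) = 1 is the equality case of
   Cauchy-Schwarz: e^{i t0 l_j} v_j r = z v_j s for a unimodular z. Hence
   p(t0 + h) = |\sum_j rho_j e^{i h l_j}|^2 with rho_j = |v_j s|^2, a probability
   distribution of mean mu = <s|H|s> and variance sigma^2 = <s|H^2|s> - mu^2.
   Rotating by e^{-i h mu}, the real part is \sum_j rho_j cos (h (l_j - mu)),
   which cos x >= 1 - x^2/2 bounds below by 1 - h^2 sigma^2 / 2; squaring gives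
   the claim, for every real h. *)

Lemma norm_sin_le (R : realType) (x : R) : `|sin x| <= `|x|.
Proof.
wlog x_ge0 : x / 0 <= x.
  move=> sin_le; have [/sin_le//|/ltW] := leP 0 x.
  by rewrite -oppr_ge0 => /sin_le; rewrite sinN !normrN.
have [->|x_gt0] := eqVneq x 0; first by rewrite sin0.
have {x_gt0} x_gt0 : 0 < x by rewrite lt_def x_gt0.
have [c _] := @MVT R sin cos 0 x x_gt0 (fun y _ => is_derive_sin y)
  (continuous_subspaceT (@continuous_sin R)).
rewrite sin0 !subr0 => ->.
by rewrite normrM ler_piMl ?normr_ge0 ?cos_max.
Qed.

Lemma quadratic_le_cos (R : realType) (x : R) : 1 - x ^+ 2 / 2 <= cos x.
Proof.
have -> : cos x = 1 - 2 * sin (x / 2) ^+ 2.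
  rewrite -[in LHS](@divfK _ 2 _ x) ?pnatr_eq0 // mulr_natr cos_mulr2n sin2cos2.
  ring.
have : sin (x / 2) ^+ 2 <= (x / 2) ^+ 2.
  rewrite -[leLHS]real_normK ?num_real // -[leRHS]real_normK ?num_real //.
  by rewrite lerXn2r ?nnegrE ?normr_ge0 ?norm_sin_le.
lra.
Qed.

Section WeightedTrig.
Variables (R : realType) (n : nat) (rho : 'I_n -> R).
Hypotheses (rho_ge0 : forall j, 0 <= rho j) (rho_sum1 : \sum_j rho j = 1).

Lemma sqr_sum_cos_sinB (x : 'I_n -> R) (a : R) :
  (\sum_j rho j * cos (x j - a)) ^+ 2 + (\sum_j rho j * sin (x j - a)) ^+ 2
  = (\sum_j rho j * cos (x j)) ^+ 2 + (\sum_j rho j * sin (x j)) ^+ 2.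
Proof.
have -> : \sum_j rho j * cos (x j - a)
    = cos a * \sum_j rho j * cos (x j) + sin a * \sum_j rho j * sin (x j).
  by rewrite !mulr_sumr -big_split /=; apply: eq_bigr => j _; rewrite cosB; ring.
have -> : \sum_j rho j * sin (x j - a)
    = cos a * \sum_j rho j * sin (x j) - sin a * \sum_j rho j * cos (x j).
  by rewrite !mulr_sumr -sumrB /=; apply: eq_bigr => j _; rewrite sinB; ring.
have := cos2Dsin2 a; nra.
Qed.

Lemma sum_cos_ge_variance (l : 'I_n -> R) (h : R) :
  1 - h ^+ 2 / 2 * (\sum_j rho j * l j ^+ 2 - (\sum_j rho j * l j) ^+ 2)
  <= \sum_j rho j * cos (h * l j - h * \sum_i rho i * l i).
Proof.
set mu := \sum_j rho j * l j.
have -> : 1 - h ^+ 2 / 2 * (\sum_j rho j * l j ^+ 2 - mu ^+ 2)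
    = \sum_j rho j * (1 - (h * l j - h * mu) ^+ 2 / 2).
  rewrite [RHS](eq_bigr (fun j => rho j - h ^+ 2 / 2 * (rho j * l j ^+ 2)
    + h ^+ 2 * mu * (rho j * l j) - h ^+ 2 * mu ^+ 2 / 2 * rho j)); last first.
    by move=> j _; field.
  rewrite sumrB big_split /= sumrB -!mulr_sumr rho_sum1 -/mu.
  by field.
by apply: ler_sum => j _; rewrite ler_wpM2l ?quadratic_le_cos.
Qed.

Lemma sqr_sum_cos_sin_ge (l : 'I_n -> R) (h : R) :
  1 - h ^+ 2 * (\sum_j rho j * l j ^+ 2 - (\sum_j rho j * l j) ^+ 2)
  <= (\sum_j rho j * cos (h * l j)) ^+ 2 + (\sum_j rho j * sin (h * l j)) ^+ 2.
Proof.
set mu := \sum_j rho j * l j; set q := h ^+ 2 / 2 * (\sum_j rho j * l j ^+ 2 - mu ^+ 2).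
rewrite -(sqr_sum_cos_sinB _ (h * mu)) /=.
have := sum_cos_ge_variance l h; rewrite -/mu -/q.
set X := \sum_j _; set Y := \sum_j _ => X_ge.
have q_eq : h ^+ 2 * (\sum_j rho j * l j ^+ 2 - mu ^+ 2) = 2 * q by rewrite /q; field.
rewrite q_eq; have := sqr_ge0 Y; have := sqr_ge0 (X - (1 - q)); nra.
Qed.

End WeightedTrig.

Section MomentSeries.
Variables (R : realType) (c : nat -> R) (e : nat -> nat) (f : R -> R).
Hypothesis cvg_series_f : forall x, series (fun k => c k * x ^+ e k) @ \oo --> f x.

Lemma limn_moment_series n (g l : 'I_n -> R) t :
  limn (fun N => \sum_(k < N) c k * t ^+ e k * \sum_j g j * l j ^+ e k)
  = \sum_j g j * f (t * l j).
Proof.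
apply: cvg_lim; first exact: Rhausdorff.
have -> : (fun N => \sum_(k < N) c k * t ^+ e k * \sum_j g j * l j ^+ e k)
    = (fun N => \sum_j g j * series (fun k => c k * (t * l j) ^+ e k) N).
  apply/funext => N; under eq_bigr do rewrite mulr_sumr.
  rewrite exchange_big; apply: eq_bigr => j _.
  rewrite /series /= big_mkord mulr_sumr; apply: eq_bigr => k _.
  by rewrite exprMn; ring.
apply: (@cvg_big R _ +%R 0 (fun _ => true)) => // [|j _]; first exact: add_continuous.
by apply: cvgMl_tmp; exact: cvg_series_f.
Qed.

Lemma moments_eq0_sum n (g l : 'I_n -> R) t :
  (forall m, \sum_j g j * l j ^+ m = 0) -> \sum_j g j * f (t * l j) = 0.
Proof.
move=> g0; rewrite -limn_moment_series.
under eq_fun do under eq_bigr do rewrite g0 mulr0.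
by under eq_fun do rewrite big1 //; exact: lim_cst.
Qed.

End MomentSeries.

Section TrigSeries.
Variable R : realType.

Lemma cvg_cos_series (x : R) :
  series (fun k => (-1) ^+ k / ((2 * k)`!)%:R * x ^+ (2 * k)) @ \oo --> cos x.
Proof.
rewrite (_ : (fun k => _) = cos_coeff' x); first exact: cvg_cos_coeff'.
by apply/funext => k; rewrite /cos_coeff' mul2n -exprnP; ring.
Qed.

Lemma cvg_sin_series (x : R) :
  series (fun k => (-1) ^+ k / ((2 * k).+1`!)%:R * x ^+ (2 * k).+1) @ \oo --> sin x.
Proof.
rewrite (_ : (fun k => _) = sin_coeff' x); first exact: cvg_sin_coeff'.
by apply/funext => k; rewrite /sin_coeff' mul2n -exprnP; ring.
Qed.

Lemma expiH_re_moments n (H : 'M[R]_n) s r (g l : 'I_n -> R) t :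
  (forall m, (H ^+ m) s r = \sum_j g j * l j ^+ m) ->
  expiH_re H t s r = \sum_j g j * cos (t * l j).
Proof.
move=> moments; rewrite -(limn_moment_series cvg_cos_series).
by congr (limn _); apply/funext => N; apply: eq_bigr => k _; rewrite moments; ring.
Qed.

Lemma expiH_im_moments n (H : 'M[R]_n) s r (g l : 'I_n -> R) t :
  (forall m, (H ^+ m) s r = \sum_j g j * l j ^+ m) ->
  expiH_im H t s r = \sum_j g j * sin (t * l j).
Proof.
move=> moments; rewrite -(limn_moment_series cvg_sin_series).
by congr (limn _); apply/funext => N; apply: eq_bigr => k _; rewrite moments; ring.
Qed.

End TrigSeries.

Section Unitary.
Variable C : numClosedFieldType.

Lemma cauchy_schwarz_eq n (a u : 'I_n -> C) :
  \sum_j (a j)^* * a j = 1 -> \sum_j (u j)^* * u j = 1 ->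
  let z := \sum_j (a j)^* * u j in z * z^* = 1 -> forall j, u j = z * a j.
Proof.
move=> a1 u1 z z1.
have dist0 : \sum_j (u j - z * a j) * (u j - z * a j)^* = 0.
  rewrite (eq_bigr (fun j => (u j)^* * u j - z * ((a j)^* * u j)^*
      - z^* * ((a j)^* * u j) + z * z^* * ((a j)^* * a j))); last first.
    by move=> j _; rewrite !rmorphB !rmorphM /= conjCK; ring.
  rewrite big_split !sumrB /= -!mulr_sumr -rmorph_sum a1 u1 -/z.
  by rewrite mulr1 z1 [z^* * z]mulrC z1 subrr sub0r addNr.
move=> j; apply/eqP; rewrite -subr_eq0 -mul_conjC_eq0; apply/eqP.
by move: dist0 => /psumr_eq0P; apply=> // k _; exact: mul_conjC_ge0.
Qed.

Lemma hermitian_spectral_moments n (A : 'M[C]_n) : A \is hermsymmx ->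
  exists (P : 'M[C]_n) (d : 'I_n -> C),
    [/\ forall i k, \sum_j (P j i)^* * P j k = (i == k)%:R,
        forall j, d j \is Num.real
      & forall m i k, (A ^+ m) i k = \sum_j (P j i)^* * P j k * d j ^+ m].
Proof.
move=> Aherm; pose P := spectralmx A; pose d := spectral_diag A.
have Pu : P \is unitarymx := spectral_unitarymx A.
have PV : invmx P = P ^t* := invmx_unitary Pu.
have PP : P ^t* *m P = 1%:M by rewrite -PV mulVmx ?unitarymx_unit.
have A_eq : A = P ^t* *m diag_mx d *m P.
  by rewrite -PV; apply/orthomx_spectralP/hermitian_normalmx.
have Am m : A ^+ m = P ^t* *m diag_mx (\row_j d 0 j ^+ m) *m P.
  elim: m => [|m IHm].
    have -> : diag_mx (\row_j d 0 j ^+ 0) = 1%:M.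
      by apply/matrixP => i j; rewrite !mxE expr0.
    by rewrite mulmx1 PP idmxE expr0.
  rewrite exprSr IHm {1}A_eq -mulmxE !mulmxA -[_ *m P *m P^t*]mulmxA.
  rewrite -PV mulmxV ?unitarymx_unit // mulmx1 -[_ *m diag_mx d]mulmxA mulmx_diag.
  by congr (_ *m diag_mx _ *m _); apply/rowP => j; rewrite !mxE exprSr.
exists P, (fun j => d 0 j); split.
- move=> i k; have /matrixP/(_ i k) := PP; rewrite !mxE => <-.
  by apply: eq_bigr => j _; rewrite !mxE.
- by move=> j; move/mxOverP: (hermitian_spectral_diag_real Aherm); apply.
- move=> m i k; rewrite Am mul_mx_diag !mxE; apply: eq_bigr => j _.
  by rewrite !mxE mulrAC.
Qed.

End Unitary.

Section ComplexPhase.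
Variable R : realType.
Local Notation C := R[i].

Definition expi (x : R) : C := cos x +i* sin x.

Lemma expiD x y : expi (x + y) = expi x * expi y.
Proof. by rewrite /expi cosD sinD /=; congr (_ +i* _); ring. Qed.

Lemma mul_conjC_complex (z : C) :
  z * z^* = (complex.Re z ^+ 2 + complex.Im z ^+ 2)%:C.
Proof. by case: z => a b /=; congr (_ +i* _); ring. Qed.

Lemma expi_mul_conjC x : expi x * (expi x)^* = 1.
Proof. by rewrite mul_conjC_complex cos2Dsin2. Qed.

Lemma Re_mul_expi (z : C) x :
  complex.Re (z * expi x) = complex.Re z * cos x - complex.Im z * sin x.
Proof. by case: z. Qed.

Lemma Im_mul_expi (z : C) x :
  complex.Im (z * expi x) = complex.Re z * sin x + complex.Im z * cos x.
Proof. by case: z => a b /=; ring. Qed.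

Lemma Re_mul_real (z : C) (x : R) : complex.Re (z * x%:C) = complex.Re z * x.
Proof. by case: z => a b /=; ring. Qed.

Lemma Im_mul_real (z : C) (x : R) : complex.Im (z * x%:C) = complex.Im z * x.
Proof. by case: z => a b /=; ring. Qed.

Lemma real_complexRe (z : C) : z \is Num.real -> z = (complex.Re z)%:C.
Proof.
case: z => a b; rewrite realE !lecE /=.
by case/orP => /andP[/eqP + _] => [-> | <-].
Qed.

Lemma symmetric_spectral_moments n (H : 'M[R]_n) : H^T = H ->
  exists (P : 'M[C]_n) (l : 'I_n -> R),
    (forall i k, \sum_j (P j i)^* * P j k = (i == k)%:R) /\
    (forall m i k, ((H ^+ m) i k)%:C = \sum_j (P j i)^* * P j k * (l j ^+ m)%:C).
Proof.
move=> HT; pose Hc := map_mx (real_complex R) H.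
have Hc_herm : Hc \is hermsymmx.
  apply: realsym_hermsym.
    apply/is_hermitianmxP; rewrite expr0 scale1r.
    by apply/matrixP => i j; rewrite !mxE -[in LHS]HT mxE.
  by apply/mxOverP => i j; rewrite mxE realE -[0]/((0 : R)%:C) !lecR le_total.
have HcX m : map_mx (real_complex R) (H ^+ m) = Hc ^+ m.
  elim: m => [|m IHm]; first by rewrite !expr0 -!idmxE map_mx1.
  by rewrite !exprS -!mulmxE map_mxM IHm.
have [P [d [PP d_real Hc_moments]]] := hermitian_spectral_moments Hc_herm.
exists P, (fun j => complex.Re (d j)); split=> // m i k.
have /matrixP/(_ i k) := HcX m; rewrite mxE => ->.
rewrite Hc_moments; apply: eq_bigr => j _.
by rewrite rmorphXn /= -real_complexRe ?d_real.
Qed.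

Definition phase_sum n (c : 'I_n -> C) (l : 'I_n -> R) (t : R) : C :=
  \sum_j c j * expi (t * l j).

Lemma phase_sum_normsq n (c : 'I_n -> C) l t :
  phase_sum c l t * (phase_sum c l t)^* =
  ((\sum_j complex.Re (c j) * cos (t * l j)
      - \sum_j complex.Im (c j) * sin (t * l j)) ^+ 2
   + (\sum_j complex.Re (c j) * sin (t * l j)
      + \sum_j complex.Im (c j) * cos (t * l j)) ^+ 2)%:C.
Proof.
rewrite mul_conjC_complex /phase_sum !raddf_sum -!big_split /=.
by congr ((_ ^+ 2 + _ ^+ 2)%:C); apply: eq_bigr => j _;
  rewrite ?Re_mul_expi ?Im_mul_expi.
Qed.

Lemma fidelity_phase_sum n (H : 'M[R]_n) s r (c : 'I_n -> C) l t :
  (forall m, ((H ^+ m) s r)%:C = \sum_j c j * (l j ^+ m)%:C) ->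
  (fidelity H s r t)%:C = phase_sum c l t * (phase_sum c l t)^*.
Proof.
move=> moments.
have Re_moments m : (H ^+ m) s r = \sum_j complex.Re (c j) * l j ^+ m.
  have /(congr1 (@complex.Re R)) := moments m; rewrite raddf_sum /= => ->.
  by apply: eq_bigr => j _; rewrite Re_mul_real.
(* H is real, so the imaginary parts of the weights have vanishing moments. *)
have Im_moments m : \sum_j complex.Im (c j) * l j ^+ m = 0.
  have /(congr1 (@complex.Im R)) := moments m; rewrite raddf_sum /= => zero.
  by rewrite [RHS]zero; apply: eq_bigr => j _; rewrite Im_mul_real.
rewrite phase_sum_normsq /fidelity (expiH_re_moments _ Re_moments)
  (expiH_im_moments _ Re_moments).
rewrite (moments_eq0_sum (@cvg_cos_series R) t Im_moments).
by rewrite (moments_eq0_sum (@cvg_sin_series R) t Im_moments) subr0 addr0.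
Qed.

Lemma perfect_transfer_phase_sum n (a b : 'I_n -> C) l t0 h :
  \sum_j (a j)^* * a j = 1 -> \sum_j (b j)^* * b j = 1 ->
  let Phi := phase_sum (fun j => (a j)^* * b j) l in
  Phi t0 * (Phi t0)^* = 1 ->
  Phi (t0 + h) * (Phi (t0 + h))^* =
  phase_sum (fun j => (a j)^* * a j) l h * (phase_sum (fun j => (a j)^* * a j) l h)^*.
Proof.
move=> a1 b1 Phi Phi1; pose u j := b j * expi (t0 * l j).
have u1 : \sum_j (u j)^* * u j = 1.
  rewrite -b1; apply: eq_bigr => j _; rewrite rmorphM mulrACA.
  by rewrite [_^* * expi _]mulrC expi_mul_conjC mulr1.
have Phi_t0 : Phi t0 = \sum_j (a j)^* * u j.
  by apply: eq_bigr => j _; rewrite mulrA.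
have u_eq := cauchy_schwarz_eq a1 u1; rewrite -Phi_t0 in u_eq.
have -> : Phi (t0 + h) = Phi t0 * phase_sum (fun j => (a j)^* * a j) l h.
  rewrite /phase_sum mulr_sumr; apply: eq_bigr => j _.
  have := u_eq Phi1 j; rewrite /u => u_j.
  by rewrite mulrDl expiD mulrA -(mulrA _ (b j)) u_j; ring.
by rewrite rmorphM mulrACA Phi1 mul1r.
Qed.

Lemma phase_sum_real_normsq n (w l : 'I_n -> R) t :
  phase_sum (fun j => (w j)%:C) l t * (phase_sum (fun j => (w j)%:C) l t)^* =
  ((\sum_j w j * cos (t * l j)) ^+ 2 + (\sum_j w j * sin (t * l j)) ^+ 2)%:C.
Proof.
have sum0 (f : _ -> R) : \sum_(j < n) 0 * f j = 0 by rewrite big1 // => j _; rewrite mul0r.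
by rewrite phase_sum_normsq /= !sum0 subr0 addr0.
Qed.

End ComplexPhase.

Lemma symmetric_fidelity_bound (R : realType) n (H : 'M[R]_n) (s r : 'I_n) t0 h :
  H^T = H -> fidelity H s r t0 = 1 ->
  1 - h ^+ 2 * ((H ^+ 2) s s - (H s s) ^+ 2) <= fidelity H s r (t0 + h).
Proof.
move=> HT fid_t0.
have [P [l [P_orth H_moments]]] := symmetric_spectral_moments HT.
pose a j := P j s; pose b j := P j r.
have a1 : \sum_j (a j)^* * a j = 1 by rewrite P_orth eqxx.
have b1 : \sum_j (b j)^* * b j = 1 by rewrite P_orth eqxx.
pose rho j := complex.Re (a j) ^+ 2 + complex.Im (a j) ^+ 2.
have rhoE j : (a j)^* * a j = (rho j)%:C by rewrite mulrC mul_conjC_complex.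
have rho_sum1 : \sum_j rho j = 1.
  apply: (@complexI R); rewrite rmorph_sum rmorph1 -a1.
  by apply: eq_bigr => j _; rewrite rhoE.
have ss_moments m : (H ^+ m) s s = \sum_j rho j * l j ^+ m.
  apply: (@complexI R); rewrite H_moments rmorph_sum; apply: eq_bigr => j _.
  by rewrite rmorphM /= -rhoE.
have fid_phase t := fidelity_phase_sum t (fun m => H_moments m s r).
have : (fidelity H s r (t0 + h))%:C =
    ((\sum_j rho j * cos (h * l j)) ^+ 2 + (\sum_j rho j * sin (h * l j)) ^+ 2)%:C.
  rewrite fid_phase (perfect_transfer_phase_sum h a1 b1); last first.
    by rewrite -fid_phase fid_t0.
  have -> : (fun j => (a j)^* * a j) = (fun j => (rho j)%:C) by apply/funext => j.
  exact: phase_sum_real_normsq.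
move=> /(@complexI R) ->.
have := ss_moments 1%N; rewrite !expr1 => ->; rewrite ss_moments.
by apply: sqr_sum_cos_sin_ge => // j; rewrite addr_ge0 ?sqr_ge0.
Qed.

Theorem corollary2p3 (R : realType) (n : nat)
  (e : rel 'I_n) (w : 'I_n -> 'I_n -> R)
  (e_sym : symmetric e) (e_irr : irreflexive e)
  (w_sym : forall j k, w j k = w k j)
  (e_conn : forall j k, connect e j k)
  (H : 'M[R]_n) (HH : H = adjacency e w \/ H = laplacian e w)
  (lam1 lamn : R)
  (H1 : eigenvalue H lam1) (Hn : eigenvalue H lamn)
  (Hext : forall a, eigenvalue H a -> lam1 <= a <= lamn)
  (s r : 'I_n) (t0 h : R)
  (Hp : fidelity H s r t0 = 1)
  (Hh : `|h| * (lamn - lam1) < pi) :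
  1 - h ^+ 2 * ((H ^+ 2) s s - (H s s) ^+ 2) <= fidelity H s r (t0 + h).
Proof.
have adjT : (adjacency e w)^T = adjacency e w.
  by apply/matrixP => i j; rewrite !mxE (e_sym j i) (w_sym j i).
apply: symmetric_fidelity_bound Hp.
case: HH => ->; first exact: adjT.
by rewrite /laplacian linearB /= tr_diag_mx adjT.
Qed.
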